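(* Let $T$ be a tree of order $n$ with $\operatorname{diam}(T)\geq 4$, and let $T_1$ be a tree obtained from $T$ by a proper generalized tree shift. Then $\lambda_1(\overline{T_1})> \lambda_1(\overline{T})$, where $\lambda_1(G)$ denotes the distance spectral radius of $G$ and $\overline{G}$ denotes the complement of $G$.
   Context: For a connected graph $G$, the distance matrix $D(G)$ has $(v_i,v_j)$-entry equal to the length of a shortest path between $v_i$ and $v_j$ in $G$; its largest eigenvalue is the distance spectral radius $\lambda_1(G)$. The complement $\overline{G}$ has the same vertex set as $G$, with two distinct vertices adjacent iff they are non-adjacent in $G$. Generalized tree shift (GTS): let $T$ be a tree and $u,v\in V(T)$ such that all interior vertices of the path $uPv$ from $u$ to $v$ in $T$ (if any) have degree $2$. Let $w$ be the neighbor of $v$ on the path $uPv$ (possibly $w=u$). The tree $T_1$ is obtained from $T$ by deleting all edges between $v$ and $N_T(v)\setminus\{w\}$ and adding all edges between $u$ and $N_T(v)\setminus\{w\}$ (here $N_T(v)$ is the set of neighbours of $v$ in $T$). The GTS is called proper if neither $u$ nor $v$ is a pendant vertex (degree-one vertex) of $T$; in that case $T_1$ has one more pendant vertex than $T$. *)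

From mathcomp Require Import all_boot all_order all_algebra.
From mathcomp Require Import all_classical all_reals.
Set Implicit Arguments. Unset Strict Implicit. Unset Printing Implicit Defensive.
Import Order.TTheory GRing.Theory Num.Theory.

(* A simple graph on a finite vertex type V is a symmetric irreflexive
   relation e : rel V (hypotheses stated in the theorem). *)
Section Graphs.
Variable V : finType.
Implicit Types (e : rel V) (x y : V).

Definition deg e x : nat := #|[set y | e x y]|.

Fixpoint dwalk e (k : nat) x y : bool :=
  if k is k'.+1 then [exists z, e x z && dwalk e k' z y] else x == y.

(* shortest-path distance: least k < #|V| such that a walk of length k
   exists (meaningful for connected graphs; then it is < #|V|). *)
Definition gdist e x y : nat := find (fun k => dwalk e k x y) (iota 0 #|V|).

Definition diam e : nat := \max_(p : V * V) gdist e p.1 p.2.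

Definition gconnected e : Prop := forall x y, connect e x y.

Definition acyclic e : Prop :=
  forall c : seq V, uniq c -> 3 <= size c -> ~~ cycle e c.

Definition is_tree e : Prop := gconnected e /\ acyclic e.

Definition compl e : rel V := fun x y => (x != y) && ~~ e x y.

(* Generalized tree shift: the tree obtained from e by moving the neighbours
   N(v)\{w} of v to u. *)
Definition gts_graph e (u v w : V) : rel V :=
  let S := fun y => e v y && (y != w) in
  fun x y =>
    [|| [&& e x y, ~~ ((x == v) && S y) & ~~ ((y == v) && S x)],
        (x == u) && S y | (y == u) && S x].

(* Hypotheses of a GTS: u <> v, the path u = x0, p', w, v in the tree has all
   interior vertices (those of p' and w, unless w = u) of degree 2.
   The sequence u :: rcons p v with p = rcons p' w (or p = [::] when w = u). *)
Definition gts_data e (u v w : V) : Prop :=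
  exists p : seq V,
    [/\ path e u (rcons p v), uniq (u :: rcons p v),
        w = last u p & all (fun z => deg e z == 2) p].

Definition proper_gts e (u v : V) : Prop := deg e u != 1 /\ deg e v != 1.

End Graphs.

Definition dist_mx (R : realType) (n : nat) (e : rel 'I_n) : 'M[R]_n :=
  \matrix_(i, j) ((gdist e i j)%:R)%R.

(* l is the largest eigenvalue (the spectral radius for distance matrices) *)
Definition largest_eig (R : realType) (n : nat) (A : 'M[R]_n) (l : R) : Prop :=
  eigenvalue A l /\ (forall m, eigenvalue A m -> (m <= l)%R).

From mathcomp Require Import all_boot all_order all_algebra.
From mathcomp Require Import all_classical all_reals all_analysis.
From mathcomp Require Import ring lra zify.
Import Order.TTheory GRing.Theory Num.Theory numFieldNormedType.Exports.
Set Implicit Arguments. Unset Strict Implicit. Unset Printing Implicit Defensive.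

(* For a tree [T] of diameter at least 4, two vertices adjacent in [T] always have a
   common neighbour in the complement, so the distance matrix of the complement is
   [J - I + A(T)]; for any graph [G] the distance matrix of its complement dominates
   [J - I + A(G)] entrywise.  Let [x] be the positive unit Perron vector of
   [J - I + A(T)], with eigenvalue [l0].  Moving a set [S] of neighbours of [a] over
   to [b] changes the quadratic form of [J - I + A] at [x] by
   [2 (x_b - x_a) (sum of x over S)].  If [x_v <= x_u], the shift itself moves
   [N(v) \ {w}] from [v] to [u]; otherwise reversing the path [uPv] relabels [T_1] as
   the tree obtained from [T] by moving the neighbours of [u] off the path to [v].
   Properness makes the moved set nonempty, so in both cases the Rayleigh quotient of
   the complement distance matrix of [T_1] at [x] is at least [l0]; equality would make
   [x] an eigenvector of both matrices for the same eigenvalue, which the column of the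
   vertex losing its neighbours forbids. *)

Section Walks.
Variables (V : finType) (e : rel V).

Lemma dwalk_cat a b x y z :
  dwalk e a x y -> dwalk e b y z -> dwalk e (a + b) x z.
Proof.
elim: a x => [|a IH] x /=; first by move/eqP->.
case/existsP=> t /andP[ext wty] wyz; apply/existsP; exists t.
by rewrite ext (IH _ wty wyz).
Qed.

Lemma dwalkSr k x y : dwalk e k.+1 x y = [exists z, dwalk e k x z && e z y].
Proof.
elim: k x => [|k IH] x.
  apply/existsP/existsP => -[z /andP[h1 h2]].
    by exists x; move/eqP: h2 => <-; rewrite /= eqxx.
  by exists y; move/eqP: h1 => ->; rewrite h2 eqxx.
apply/existsP/existsP => -[t /andP[wxt wty]].
  have : dwalk e k.+1 t y := wty.
  rewrite IH => /existsP[z /andP[wtz ezy]].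
  by exists z; rewrite ezy andbT /=; apply/existsP; exists t; rewrite wxt.
case/existsP: wxt => z /andP[exz wzt]; exists z; rewrite exz /=.
have : dwalk e k.+1 z y by rewrite IH; apply/existsP; exists t; apply/andP.
by [].
Qed.

Lemma dwalk_le1 x y : (x == y) || e x y -> exists2 k, (k <= 1)%N & dwalk e k x y.
Proof.
case/orP => [/eqP->|exy]; first by exists 0%N; rewrite //= eqxx.
by exists 1%N => //=; apply/existsP; exists y; rewrite exy eqxx.
Qed.

Lemma gdist_le k x y : dwalk e k x y -> (k < #|V|)%N -> (gdist e x y <= k)%N.
Proof.
move=> wxy k_lt; rewrite leqNgt; apply/negP => /(before_find 0).
by rewrite nth_iota // add0n wxy.
Qed.

Lemma gdist_ge k x y :
  (forall j, (j < k)%N -> ~~ dwalk e j x y) -> (k <= #|V|)%N -> (k <= gdist e x y)%N.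
Proof.
move=> nowalk k_le; rewrite leqNgt; apply/negP => lt_d.
have has_walk : has (fun j => dwalk e j x y) (iota 0 #|V|).
  by rewrite has_find size_iota (leq_trans lt_d k_le).
have := nth_find 0 has_walk; rewrite nth_iota; last by move: has_walk; rewrite has_find size_iota.
by rewrite add0n (negbTE (nowalk _ lt_d)).
Qed.

Lemma gdist_le_card x y : (gdist e x y <= #|V|)%N.
Proof. by rewrite -[X in (_ <= X)%N](size_iota 0) find_size. Qed.

Lemma gdistxx x : gdist e x x = 0%N.
Proof.
apply/eqP; rewrite -leqn0; apply: gdist_le; first by rewrite /= eqxx.
by apply/card_gt0P; exists x.
Qed.

Lemma gdist_gt0 x y : x != y -> (0 < gdist e x y)%N.
Proof.
move=> neq_xy; apply: gdist_ge => [[|//]|]; first by rewrite /= (negbTE neq_xy).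
by apply/card_gt0P; exists x.
Qed.

Lemma diam_le_card : (diam e <= #|V|)%N.
Proof. by apply/bigmax_leqP => xy _; apply: gdist_le_card. Qed.

Lemma diam_le d : (d < #|V|)%N ->
  (forall x y, exists2 k, (k <= d)%N & dwalk e k x y) -> (diam e <= d)%N.
Proof.
move=> d_lt walks; apply/bigmax_leqP => -[x y] _ /=.
have [k k_le wxy] := walks x y.
by apply: leq_trans (gdist_le wxy (leq_ltn_trans k_le d_lt)) k_le.
Qed.

Hypothesis se : symmetric e.

Lemma dwalk_sym k x y : dwalk e k x y = dwalk e k y x.
Proof.
suff walk_rev k' x' y' : dwalk e k' x' y' -> dwalk e k' y' x'.
  by apply/idP/idP; apply: walk_rev.
elim: k' x' y' => [|k' IH] x' y'; first by rewrite /= eq_sym.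
rewrite dwalkSr => /existsP[t /andP[wxt ety]].
by apply/existsP; exists t; rewrite se ety; apply: IH.
Qed.

Lemma gdist_sym x y : gdist e x y = gdist e y x.
Proof. by apply: eq_find => k; rewrite dwalk_sym. Qed.

End Walks.

Section Degree.
Variables (V : finType) (e : rel V).

Lemma deg_ge3 z a b y : e z a -> e z b -> e z y ->
  a != b -> y != a -> y != b -> (3 <= deg e z)%N.
Proof.
move=> za zb zy nab nya nyb.
have sub : y |: [set a; b] \subset [set t | e z t].
  by apply/fintype.subsetP => t; rewrite !inE => /or3P[] /eqP->.
apply: leq_trans (subset_leq_card sub).
by rewrite cardsU1 cards2 !inE negb_or nya nyb nab.
Qed.

Lemma other_nbr z a : e z a -> deg e z != 1%N -> exists t, e z t && (t != a).
Proof.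
move=> eza; have [/existsP //|/existsPn noother] := boolP [exists t, e z t && (t != a)].
rewrite /deg; suff -> : [set t | e z t] = [set a] by rewrite cards1.
apply/setP => t; rewrite !inE; have := noother t.
by case: eqP => [->|_]; rewrite ?eza // andbT => /negbTE.
Qed.

End Degree.

Section ComplementDistance.
Variable V : finType.
Implicit Types (f : rel V) (x y : V).

(* The distance in [compl f] whenever [compl f] has diameter at most 2. *)
Definition cdist f x y : nat := if x == y then 0 else if f x y then 2 else 1.

Lemma compl_sym f : symmetric f -> symmetric (compl f).
Proof. by move=> sf x y; rewrite /compl eq_sym sf. Qed.

Lemma cdist_le_gdist_compl f x y :
  (1 < #|V|)%N -> (cdist f x y <= gdist (compl f) x y)%N.
Proof.
rewrite /cdist => V_gt1; case: eqVneq => [//|neq_xy].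
case fxy: (f x y); last exact: gdist_gt0.
apply: gdist_ge => // -[|[|//]] _ /=; first by rewrite (negbTE neq_xy).
by apply/existsP => -[z /andP[cxz /eqP zy]]; move: cxz; rewrite zy /compl fxy andbF.
Qed.

Variable e : rel V.
Hypotheses (se : symmetric e) (diam_ge4 : (4 <= diam e)%N).

Lemma card_ge4 : (4 <= #|V|)%N.
Proof. exact: leq_trans diam_ge4 (diam_le_card e). Qed.

(* If not, every vertex is within distance 1 of [x] or [y], which forces [diam e <= 3]. *)
Lemma compl_common_nbr x y : e x y -> exists z, compl e x z && compl e z y.
Proof.
move=> exy; have [/existsP //|/existsPn none] := boolP [exists z, compl e x z && compl e z y].
have near z : exists2 q, q \in [:: x; y] & (z == q) || e z q.
  move: (none z); rewrite /compl !negb_and !negbK [e x z]se [x == z]eq_sym.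
  case/orP => /orP[] near_z; [exists x | exists x | exists y | exists y];
    by rewrite ?inE ?eqxx ?near_z ?orbT.
suff : (diam e <= 3)%N by rewrite leqNgt diam_ge4.
apply: diam_le => [|a b]; first exact: card_ge4.
have [qa qa_xy /dwalk_le1[ka ka_le wa]] := near a.
have [qb qb_xy /dwalk_le1[kb kb_le wb]] := near b.
have [km km_le wm] : exists2 km, (km <= 1)%N & dwalk e km qa qb.
  apply: dwalk_le1; move: qa_xy qb_xy; rewrite !inE.
  case/orP=> /eqP-> /orP[] /eqP->; by rewrite ?eqxx ?[e y x]se ?exy ?orbT.
rewrite dwalk_sym // in wb.
by exists (ka + km + kb)%N; [lia | apply: dwalk_cat (dwalk_cat wa wm) wb].
Qed.

Lemma gdist_compl x y : gdist (compl e) x y = cdist e x y.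
Proof.
apply/eqP; rewrite eqn_leq cdist_le_gdist_compl ?(leq_trans _ card_ge4) // andbT.
have card_gt k : (k <= 2)%N -> (k < #|V|)%N by move=> k_le; apply: leq_trans card_ge4; lia.
rewrite /cdist; case: eqVneq => [->|neq_xy]; first by rewrite gdistxx.
case exy: (e x y).
  have [z /andP[cxz czy]] := compl_common_nbr exy.
  apply: gdist_le (card_gt 2%N isT).
  apply: (dwalk_cat (a := 1) (b := 1) (y := z)).
    by apply/existsP; exists z; rewrite cxz eqxx.
  by apply/existsP; exists y; rewrite czy eqxx.
apply: gdist_le (card_gt 1%N isT).
by apply/existsP; exists y; rewrite /compl neq_xy exy eqxx.
Qed.

End ComplementDistance.

Section MoveNeighbours.
Variable V : finType.
Implicit Types (f : rel V) (a b x y : V) (S : pred V).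

Definition move_nbrs f a b S : rel V := fun x y =>
  [|| [&& f x y, ~~ ((x == a) && S y) & ~~ ((y == a) && S x)],
      (x == b) && S y | (y == b) && S x].

Lemma gts_graphE f u v w :
  gts_graph f u v w = move_nbrs f v u (fun y => f v y && (y != w)).
Proof. by []. Qed.

Lemma move_nbrs_sym f a b S : symmetric f -> symmetric (move_nbrs f a b S).
Proof.
move=> sf x y; rewrite /move_nbrs sf.
by case: (x == a) (y == a) (x == b) (y == b) (S x) (S y) => [] [] [] [] [] [];
  rewrite /= ?andbT ?andbF ?orbF ?orbT.
Qed.

Lemma gts_graph_sym f u v w : symmetric f -> symmetric (gts_graph f u v w).
Proof. exact: move_nbrs_sym. Qed.

Lemma move_nbrs_notin f a b S x y : ~~ S x -> ~~ S y -> move_nbrs f a b S x y = f x y.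
Proof. by move=> /negbTE Sx /negbTE Sy; rewrite /move_nbrs Sx Sy !andbF /= !orbF andbT. Qed.

Lemma move_nbrs_far f a b S x y :
  x != a -> x != b -> y != a -> y != b -> move_nbrs f a b S x y = f x y.
Proof. by rewrite /move_nbrs => /negbTE-> /negbTE-> /negbTE-> /negbTE->; rewrite orbF andbT. Qed.

End MoveNeighbours.

Section AcyclicPath.
Variables (V : finType) (e : rel V).
Hypothesis ac : acyclic e.

Lemma acyclic_path_no_chord (c : seq V) x0 i j :
  uniq c -> (forall t, (t.+1 < size c)%N -> e (nth x0 c t) (nth x0 c t.+1)) ->
  (i.+2 <= j)%N -> (j < size c)%N -> ~~ e (nth x0 c j) (nth x0 c i).
Proof.
move=> uc c_path ij j_lt; apply/negP => eji.
pose s := drop i (take j.+1 c).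
have size_s : size s = (j.+1 - i)%N by rewrite size_drop size_take; case: ifP; lia.
have nth_s t : (t < size s)%N -> nth x0 s t = nth x0 c (i + t).
  by rewrite size_s => t_lt; rewrite nth_drop nth_take //; lia.
have s_ge3 : (3 <= size s)%N by rewrite size_s; lia.
apply: (negP (ac (drop_uniq i (take_uniq j.+1 uc)) s_ge3)).
rewrite (cycle_path x0); apply/(pathP x0) => t t_lt.
rewrite -nth_last nth_s ?size_s; last lia.
case: t t_lt => [|t] t_lt /=; rewrite -/s in t_lt *.
  by rewrite nth_s ?size_s; [rewrite (_ : (i + (j.+1 - i).-1 = j)%N) ?addn0 //; lia | lia].
rewrite size_s in t_lt; rewrite !nth_s ?size_s; try lia.
by rewrite addnS; apply: c_path; lia.
Qed.

End AcyclicPath.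

Section GtsPath.
Variables (V : finType) (e : rel V) (u v w : V) (p : seq V).
Hypotheses (se : symmetric e) (ie : irreflexive e) (ac : acyclic e).
Hypotheses (e_path : path e u (rcons p v)) (uniq_path : uniq (u :: rcons p v)).
Hypotheses (w_last : w = last u p) (deg2 : all (fun z => deg e z == 2) p).

Let c := u :: rcons p v.
Let k := (size p).+1.

Let size_c : size c = k.+1.
Proof. by rewrite /= size_rcons. Qed.

Let c_head : nth u c 0 = u. Proof. by []. Qed.

Let c_last : nth u c k = v.
Proof. by rewrite /= nth_rcons ltnn eqxx. Qed.

Let c_penult : nth u c k.-1 = w.
Proof.
by rewrite -[c]/(rcons (u :: p) v) nth_rcons /= ltnS leqnn w_last (nth_last u (u :: p)).
Qed.

Let c_step t : (t < k)%N -> e (nth u c t) (nth u c t.+1).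
Proof. by move=> t_lt; apply: (pathP u e_path); rewrite size_rcons. Qed.

Let nth_c_eq i j : (i <= k)%N -> (j <= k)%N -> (nth u c i == nth u c j) = (i == j).
Proof. by move=> i_le j_le; rewrite nth_uniq // size_c. Qed.

Let mem_c m : (m <= k)%N -> nth u c m \in c.
Proof. by move=> m_le; rewrite mem_nth // size_c. Qed.

Let c_index z : z \in c -> exists2 m, (m <= k)%N & z = nth u c m.
Proof. by move=> zc; exists (index z c); rewrite ?nth_index // -ltnS -size_c index_mem. Qed.

Let c_adj i j : (i <= k)%N -> (j <= k)%N ->
  e (nth u c i) (nth u c j) = (i == j.+1) || (j == i.+1).
Proof.
move=> i_le j_le; apply/idP/idP; last first.
  by case/orP => /eqP E; rewrite E in i_le j_le *; [rewrite se|]; apply: c_step; lia.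
have c_path t : (t.+1 < size c)%N -> e (nth u c t) (nth u c t.+1).
  by rewrite size_c => t_lt; apply: c_step; lia.
have no_chord i' j' : (i'.+2 <= j')%N -> (j' <= k)%N -> ~~ e (nth u c j') (nth u c i').
  by move=> ij' j'_le; apply: acyclic_path_no_chord; rewrite ?size_c.
case: (ltngtP i j) => [ij|ji|<-]; last by rewrite ie.
- by rewrite se; apply: contraTT => /norP[_ /eqP ?]; apply: no_chord; lia.
- by apply: contraTT => /norP[/eqP ? _]; apply: no_chord; lia.
Qed.

Let c_inner_nbr m y : (0 < m < k)%N -> e (nth u c m) y -> y \in c.
Proof.
move=> /andP[m_gt0 m_lt] ey; apply: contraT => yc.
have : nth u c m \in p.
  by case: m m_gt0 m_lt {ey} => //= m _ m_lt; rewrite nth_rcons ifT ?mem_nth //; lia.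
move=> /(allP deg2) /eqP deg_m.
suff : (3 <= deg e (nth u c m))%N by rewrite deg_m.
apply: (deg_ge3 (a := nth u c m.-1) (b := nth u c m.+1) _ _ ey) => //.
- by rewrite se; have := @c_step m.-1; rewrite prednK //; apply; lia.
- by apply: c_step.
- by rewrite nth_c_eq; lia.
- by apply: contraNneq yc => ->; apply: mem_c; lia.
- by apply: contraNneq yc => ->; apply: mem_c; lia.
Qed.

Let c_ends_no_common_nbr s : s \notin c -> e v s -> e s u -> False.
Proof.
move=> sc evs esu; have cs_uniq : uniq (rcons c s) by rewrite rcons_uniq sc uniq_path.
have cs_ge3 : (3 <= size (rcons c s))%N by rewrite size_rcons size_c.
apply: (negP (ac cs_uniq cs_ge3)).
by rewrite /= rcons_path rcons_path e_path last_rcons evs /= last_rcons esu.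
Qed.

Lemma gts_neq_uv : u != v.
Proof. by rewrite -c_head -c_last nth_c_eq. Qed.

Let moved_notin s : e v s && (s != w) -> s \notin c.
Proof.
case/andP=> evs nsw; apply/negP => /c_index[m m_le E]; move: evs nsw.
rewrite E -c_last c_adj //.
by case/orP=> /eqP m_eq; [rewrite -c_penult m_eq eqxx | lia].
Qed.

Lemma gts_moved_nbr s : e v s && (s != w) -> [/\ e v s, s != u & ~~ e u s].
Proof.
move=> Ss; have sc := moved_notin Ss; case/andP: Ss => evs _.
split=> //; first by apply: contraNneq sc => ->; rewrite -c_head mem_c.
by apply/negP => eus; apply: (c_ends_no_common_nbr sc evs); rewrite se.
Qed.

Lemma gts_moved_exists : deg e v != 1%N -> exists s, e v s && (s != w).
Proof.
by apply: other_nbr; rewrite -c_last -c_penult c_adj ?leq_pred // /= eqxx.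
Qed.

Definition path_nbr := nth u c 1.

Let rev_moved_notin t : e u t && (t != path_nbr) -> t \notin c.
Proof.
case/andP=> eut ntc; apply/negP => /c_index[m m_le E]; move: eut ntc.
rewrite E -{1}c_head c_adj //.
by case/orP=> /eqP m_eq //; rewrite /path_nbr m_eq eqxx.
Qed.

Lemma gts_rev_moved_nbr t : e u t && (t != path_nbr) -> [/\ e u t, t != v & ~~ e v t].
Proof.
move=> St; have tc := rev_moved_notin St; case/andP: St => eut _.
split=> //; first by apply: contraNneq tc => ->; rewrite -c_last mem_c.
by apply/negP => evt; apply: (c_ends_no_common_nbr tc evt); rewrite se.
Qed.

Lemma gts_rev_moved_exists : deg e u != 1%N -> exists t, e u t && (t != path_nbr).
Proof. by apply: other_nbr; rewrite -{1}c_head /path_nbr c_adj. Qed.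

Definition path_rev z := if z \in c then nth u c (k - index z c) else z.

Let path_rev_nth m : (m <= k)%N -> path_rev (nth u c m) = nth u c (k - m).
Proof. by move=> m_le; rewrite /path_rev mem_c // index_uniq // size_c. Qed.

Let path_rev_out z : z \notin c -> path_rev z = z.
Proof. by rewrite /path_rev => /negbTE->. Qed.

Lemma path_revK : involutive path_rev.
Proof.
move=> z; have [/c_index[m m_le ->]|zc] := boolP (z \in c); last by rewrite !path_rev_out.
by rewrite !path_rev_nth ?leq_subr // subKn.
Qed.

Let u_in : u \in c. Proof. by rewrite -c_head mem_c. Qed.
Let v_in : v \in c. Proof. by rewrite -c_last mem_c. Qed.
Let w_in : w \in c. Proof. by rewrite -c_penult mem_c ?leq_pred. Qed.
Let nbr_in : path_nbr \in c. Proof. by rewrite mem_c. Qed.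

Let Sv := fun y => e v y && (y != w).
Let Su := fun t => e u t && (t != path_nbr).

Let path_rev_move_out x y : y \notin c ->
  move_nbrs e v u Sv (path_rev x) (path_rev y) = move_nbrs e u v Su x y.
Proof.
move=> yc; rewrite (path_rev_out yc).
have [yu yv yw yc1] : [/\ y != u, y != v, y != w & y != path_nbr].
  by split; apply: contraNneq yc => ->; rewrite ?u_in ?v_in ?w_in ?nbr_in.
have [/c_index[m m_le ->]|xc] := boolP (x \in c); last first.
  have [xu xv] : x != u /\ x != v.
    by split; apply: contraNneq xc => ->; rewrite ?u_in ?v_in.
  by rewrite (path_rev_out xc) !move_nbrs_far.
have uv := negbTE gts_neq_uv.
rewrite path_rev_nth //; case: (posnP m) => [->|m_gt0].
  rewrite subn0 c_last c_head /move_nbrs !eqxx uv [v == u]eq_sym uv.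
  by rewrite (negbTE yu) (negbTE yv) /Sv /Su yw yc1 /=; case: (e v y); case: (e u y).
case: (ltngtP m k) => [m_lt|m_gt|->]; [|by exfalso; lia|]; last first.
  rewrite subnn c_last c_head /move_nbrs !eqxx uv [v == u]eq_sym uv.
  rewrite (negbTE yu) (negbTE yv) /Sv /Su yw yc1 /= !andbT !orbF.
  by case: (e v y); case: (e u y).
have inner t : (0 < t < k)%N ->
    [/\ nth u c t != u, nth u c t != v & ~~ e (nth u c t) y].
  move=> /andP[t_gt0 t_lt]; split.
  - by rewrite -[X in _ != X]c_head nth_c_eq ?(ltnW t_lt) // -lt0n.
  - by rewrite -c_last nth_c_eq ?(ltnW t_lt) // ltn_eqF.
  - by apply: (contraNN _ yc); apply: c_inner_nbr; rewrite t_gt0.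
have m_in : (0 < m < k)%N by rewrite m_gt0 m_lt.
have km_in : (0 < k - m < k)%N by rewrite subn_gt0 m_lt ltn_subrL m_gt0.
have [xu xv /negbTE exy] := inner m m_in.
have [zu zv /negbTE ezy] := inner (k - m)%N km_in.
by rewrite !move_nbrs_far // exy ezy.
Qed.

Let Sv_c z : z \in c -> ~~ Sv z.
Proof. exact: contraL (@moved_notin z). Qed.

Let Su_c z : z \in c -> ~~ Su z.
Proof. exact: contraL (@rev_moved_notin z). Qed.

Lemma gts_graph_path_rev x y :
  gts_graph e u v w (path_rev x) (path_rev y) =
  move_nbrs e u v (fun t => e u t && (t != path_nbr)) x y.
Proof.
have [/c_index[b b_le ->]|yc] := boolP (y \in c); last exact: path_rev_move_out.
have [/c_index[a a_le ->]|xc] := boolP (x \in c); last first.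
  by rewrite gts_graphE move_nbrs_sym // [RHS]move_nbrs_sym // path_rev_move_out ?mem_c.
rewrite !path_rev_nth // gts_graphE !move_nbrs_notin ?Sv_c ?Su_c ?mem_c ?leq_subr //.
by rewrite !c_adj ?leq_subr //; apply/idP/idP => /orP[] /eqP ?; apply/orP; lia.
Qed.

End GtsPath.

Local Open Scope ring_scope.

Section Rayleigh.
Variables (R : realType) (n : nat).
Implicit Types (A B M : 'M[R]_n) (c x y : 'rV[R]_n) (l : R).

Definition qform M x : R := (x *m M *m x^T) 0 0.
Definition sqnorm x : R := qform 1%:M x.
Definition rayleigh_ub M l := forall x, qform M x <= l * sqnorm x.

Let mx11D (A B : 'M[R]_1) : (A + B) 0 0 = A 0 0 + B 0 0.
Proof. by rewrite mxE. Qed.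

Let mx11Z a (A : 'M[R]_1) : (a *: A) 0 0 = a * A 0 0.
Proof. by rewrite mxE. Qed.

Lemma qformE M x : qform M x = \sum_j \sum_i x 0 i * M i j * x 0 j.
Proof.
by rewrite /qform !mxE; apply: eq_bigr => j _; rewrite !mxE mulr_suml.
Qed.

Lemma sqnormE x : sqnorm x = \sum_j x 0 j ^+ 2.
Proof.
rewrite /sqnorm qformE; apply: eq_bigr => j _.
rewrite (bigD1 j) //= big1 => [|i /negbTE ij]; last by rewrite mxE ij mulr0 mul0r.
by rewrite mxE eqxx mulr1 addr0 expr2.
Qed.

Lemma qform_continuous M : continuous (qform M).
Proof.
rewrite (_ : qform M = fun x => \sum_j \sum_i x 0 i * M i j * x 0 j); last first.
  by apply/funext => x; rewrite qformE.
apply: continuous_big => [|j _]; first exact: add_continuous.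
apply: continuous_big => [|i _ x]; first exact: add_continuous.
have coord k : continuous (fun y : 'rV[R]_n => y 0 k) by apply: coord_continuous.
by apply: (continuousM (s := fun y => y 0 i * M i j)); [apply: continuousM |];
  [exact: coord | exact: cst_continuous | exact: coord].
Qed.

Lemma sqr_coord_le_sqnorm x j : x 0 j ^+ 2 <= sqnorm x.
Proof. by rewrite sqnormE (bigD1 j) //= lerDl sumr_ge0 // => i _; apply: sqr_ge0. Qed.

Lemma sqnorm_ge0 x : 0 <= sqnorm x.
Proof. by rewrite sqnormE sumr_ge0 // => j _; apply: sqr_ge0. Qed.

Lemma sqnorm_eq0 x : (sqnorm x == 0) = (x == 0).
Proof.
apply/eqP/eqP => [x0|->]; last by rewrite /sqnorm /qform !mul0mx mxE.
apply/rowP => j; apply/eqP; rewrite mxE -sqrf_eq0 eq_le sqr_ge0 andbT.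
by rewrite -x0 sqr_coord_le_sqnorm.
Qed.

Lemma sqnorm_gt0 x : (0 < sqnorm x) = (x != 0).
Proof. by rewrite lt_def sqnorm_ge0 sqnorm_eq0 andbT. Qed.

Lemma qformZ M a x : qform M (a *: x) = a ^+ 2 * qform M x.
Proof. by rewrite /qform linearZ /= -!scalemxAl -scalemxAr !mxE expr2 mulrA. Qed.

Lemma sqnormZ a x : sqnorm (a *: x) = a ^+ 2 * sqnorm x.
Proof. exact: qformZ. Qed.

Lemma qformDl A B x : qform (A + B) x = qform A x + qform B x.
Proof. by rewrite /qform mulmxDr mulmxDl mx11D. Qed.

Lemma qformBl A B x : qform (A - B) x = qform A x - qform B x.
Proof. by rewrite /qform mulmxBr mulmxBl !mxE. Qed.

Lemma qform_tr M x : qform M^T x = qform M x.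
Proof.
rewrite /qform (_ : x *m M^T *m x^T = (x *m M *m x^T)^T) ?mxE //.
by rewrite !trmx_mul trmxK mulmxA.
Qed.

Lemma qformDr M x y : M^T = M ->
  qform M (x + y) = qform M x + 2 * (x *m M *m y^T) 0 0 + qform M y.
Proof.
move=> sM; have cross : (y *m M *m x^T) 0 0 = (x *m M *m y^T) 0 0.
  rewrite (_ : y *m M *m x^T = (x *m M *m y^T)^T) ?mxE //.
  by rewrite !trmx_mul trmxK sM mulmxA.
by rewrite /qform linearD /= !mulmxDl !mulmxDr !mx11D cross; ring.
Qed.

Lemma qform_eigen M x l : x *m M = l *: x -> qform M x = l * sqnorm x.
Proof. by move=> xM; rewrite /qform xM /sqnorm /qform mulmx1 -scalemxAl mxE. Qed.

Lemma quadratic_ge0_linear0 (a b : R) : (forall t, 0 <= b * t + a * t ^+ 2) -> b = 0.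
Proof.
move=> ge0; pose A : R := `|a| + 1; have A_gt0 : 0 < A by rewrite ltr_pwDr ?normr_ge0.
have bE : b = b / A * A by rewrite divfK ?gt_eqF.
have := ge0 (- (b / A)); rewrite {1}bE; set s := b / A => h.
have : s ^+ 2 <= 0.
  have : 0 <= `|a| - a by rewrite subr_ge0 ler_norm.
  move/(mulr_ge0 (sqr_ge0 s)); rewrite /A in h; nra.
move=> s2_le0; have /eqP s0 : s == 0 by rewrite -sqrf_eq0 eq_le s2_le0 sqr_ge0.
by rewrite bE -/s s0 mul0r.
Qed.

Lemma sphere_compact : compact [set x : 'rV[R]_n | sqnorm x = 1]%classic.
Proof.
pose cube := [set x : 'rV[R]_n | forall i, `[-1, 1]%classic (x ord0 i)]%classic.
apply: (@subclosed_compact _ _ cube).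
- rewrite (_ : [set x | _]%classic = (sqnorm @^-1` [set y | y = 1])%classic) //.
  by apply: preimage_closed => [x _|]; [apply: qform_continuous | apply: closed_eq].
- by apply: (@rV_compact R n (fun _ => `[-1, 1]%classic)) => _; apply: segment_compact.
- move=> x /= x1 i; rewrite /= in_itv /=.
  by have := sqr_coord_le_sqnorm x i; rewrite x1 => ?; apply/andP; split; nra.
Qed.

Section Symmetric.
Variable M : 'M[R]_n.
Hypothesis sM : M^T = M.

(* On the line [c + t d], [d = c M - l c], the form [l sqnorm - qform M] is nonnegative
   and vanishes at [t = 0], so its linear coefficient [- 2 sqnorm d] vanishes. *)
Lemma rayleigh_eigen l c : rayleigh_ub M l -> qform M c = l * sqnorm c -> c *m M = l *: c.
Proof.
move=> ub qc; pose d := c *m M - l *: c.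
have cMd : (c *m M *m d^T) 0 0 = sqnorm d + l * (c *m 1%:M *m d^T) 0 0.
  have -> : c *m M = d + l *: c by rewrite /d subrK.
  by rewrite mulmxDl -scalemxAl mx11D mx11Z /sqnorm /qform !mulmx1.
suff /eqP : - (2 * sqnorm d) = 0.
  by rewrite oppr_eq0 mulf_eq0 pnatr_eq0 /= sqnorm_eq0 subr_eq0 => /eqP.
apply: (@quadratic_ge0_linear0 (l * sqnorm d - qform M d)) => t.
have := ub (c + t *: d); rewrite -subr_ge0 qformDr // /sqnorm qformDr ?trmx1 //.
rewrite -!/(sqnorm _) !qformZ !sqnormZ qc -/(sqnorm d).
rewrite ![(t *: d)^T]linearZ /= -!scalemxAr !mx11Z cMd; lra.
Qed.

Lemma rayleigh_ub_max c : sqnorm c = 1 ->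
  (forall x, sqnorm x = 1 -> qform M x <= qform M c) -> rayleigh_ub M (qform M c).
Proof.
move=> c1 cmax x; have [->|x_neq0] := eqVneq x 0.
  by rewrite /sqnorm /qform !mul0mx mxE mulr0.
have x_gt0 : 0 < sqnorm x by rewrite sqnorm_gt0.
pose a := (Num.sqrt (sqnorm x))^-1.
have a2 : a ^+ 2 = (sqnorm x)^-1 by rewrite exprVn sqr_sqrtr ?ltW.
have := cmax (a *: x); rewrite sqnormZ qformZ a2 mulVf ?gt_eqF // => /(_ erefl) le_c.
by have := ler_wpM2r (ltW x_gt0) le_c; rewrite mulrAC mulVf ?gt_eqF // mul1r.
Qed.

Lemma rayleigh_exists : (0 < n)%N ->
  exists l c, [/\ sqnorm c = 1, c *m M = l *: c & rayleigh_ub M l].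
Proof.
move=> n_gt0; pose S := [set x : 'rV[R]_n | sqnorm x = 1]%classic.
have S_ne0 : (S !=set0)%classic.
  exists (delta_mx 0 (Ordinal n_gt0)); rewrite /S /= sqnormE (bigD1 (Ordinal n_gt0)) //=.
  by rewrite big1 => [|j /negbTE j_neq]; rewrite mxE ?eqxx ?j_neq ?expr1n ?addr0 ?expr0n.
have [c /[!inE] c1 cmax] := EVT_max_rV S_ne0 sphere_compact
  (continuous_subspaceT (@qform_continuous M)).
have ub : rayleigh_ub M (qform M c).
  by apply: rayleigh_ub_max => // x x1; apply: cmax; rewrite inE.
by exists (qform M c), c; split; last exact: ub; rewrite // (rayleigh_eigen ub) // c1 mulr1.
Qed.

End Symmetric.

Lemma largest_eig_rayleigh M l c :
  c != 0 -> c *m M = l *: c -> rayleigh_ub M l -> largest_eig M l.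
Proof.
move=> c_neq0 cM ub; split=> [|m /eigenvalueP[x xM x_neq0]].
  by apply/eigenvalueP; exists c.
by have := ub x; rewrite (qform_eigen xM) ler_pM2r // sqnorm_gt0.
Qed.

End Rayleigh.

Section NonnegativeForms.
Variables (R : realType) (n : nat).
Implicit Types (A B M : 'M[R]_n) (x : 'rV[R]_n) (l : R).

Lemma ler_qform A B x : (forall i j, A i j <= B i j) -> (forall i, 0 <= x 0 i) ->
  qform A x <= qform B x.
Proof.
move=> le_AB x_ge0; rewrite !qformE; apply: ler_sum => j _; apply: ler_sum => i _.
by rewrite ler_wpM2r ?ler_wpM2l.
Qed.

Lemma qform_le_norm A x :
  (forall i j, 0 <= A i j) -> qform A x <= qform A (map_mx Num.norm x).
Proof.
move=> A_ge0; rewrite !qformE; apply: ler_sum => j _; apply: ler_sum => i _.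
by rewrite !mxE (le_trans (ler_norm _)) // !normrM (ger0_norm (A_ge0 i j)).
Qed.

Lemma sqnorm_norm x : sqnorm (map_mx Num.norm x) = sqnorm x.
Proof. by rewrite !sqnormE; apply: eq_bigr => i _; rewrite mxE real_normK ?num_real. Qed.

Lemma qform_eq_entries A B x : (forall i j, A i j <= B i j) -> (forall i, 0 < x 0 i) ->
  qform A x = qform B x -> forall i j, A i j = B i j.
Proof.
move=> le_AB x_gt0 qAB i j.
have term_ge0 i' j' : 0 <= x 0 i' * (B i' j' - A i' j') * x 0 j'.
  by rewrite mulr_ge0 ?mulr_ge0 ?subr_ge0 ?le_AB ?(ltW (x_gt0 _)).
have : \sum_j' \sum_i' x 0 i' * (B i' j' - A i' j') * x 0 j' = 0.
  rewrite -[RHS](subrr (qform B x)) -{2}qAB !qformE -sumrB; apply: eq_bigr => j' _.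
  by rewrite -sumrB; apply: eq_bigr => i' _; ring.
move/eqP; rewrite psumr_eq0 => [/allP/(_ j (mem_index_enum _))|j' _]; last exact: sumr_ge0.
rewrite psumr_eq0 // => /allP/(_ i (mem_index_enum _)).
by rewrite !mulf_eq0 subr_eq0 (gt_eqF (x_gt0 i)) (gt_eqF (x_gt0 j)) orbF => /eqP.
Qed.

Lemma eigen_pos A x l : (forall i j, 0 <= A i j) -> (forall i j, i != j -> 0 < A i j) ->
  (forall i, 0 <= x 0 i) -> x != 0 -> x *m A = l *: x -> forall i, 0 < x 0 i.
Proof.
move=> A_ge0 A_gt0 x_ge0 x_neq0 xA i; rewrite lt_def x_ge0 andbT.
apply: contra x_neq0 => /eqP xi0.
have /eqP : \sum_j x 0 j * A j i = 0.
  by have := congr1 (fun y : 'rV[R]_n => y 0 i) xA; rewrite !mxE xi0 mulr0.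
rewrite psumr_eq0 => [/allP xA0|j _]; last exact: mulr_ge0.
apply/eqP/rowP => j; rewrite !mxE; have [->//|ji] := eqVneq j i.
have := xA0 j (mem_index_enum _).
by rewrite mulf_eq0 (gt_eqF (A_gt0 _ _ ji)) orbF => /eqP.
Qed.

Lemma perron_vector M : (0 < n)%N -> M^T = M ->
  (forall i j, 0 <= M i j) -> (forall i j, i != j -> 0 < M i j) ->
  exists l x, [/\ forall i, 0 < x 0 i, sqnorm x = 1, x *m M = l *: x & rayleigh_ub M l].
Proof.
move=> n_gt0 sM M_ge0 M_gt0; have [l [c [c1 cM ub]]] := rayleigh_exists sM n_gt0.
pose x := map_mx Num.norm c; have x1 : sqnorm x = 1 by rewrite sqnorm_norm.
have qx : qform M x = l * sqnorm x.
  apply/le_anti; rewrite ub x1 mulr1 -[l]mulr1 -c1 -(qform_eigen cM).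
  exact: qform_le_norm.
have xM := rayleigh_eigen sM ub qx.
exists l, x; split=> //; apply: eigen_pos xM => // [i|]; first by rewrite mxE.
by rewrite -sqnorm_gt0 x1.
Qed.

End NonnegativeForms.

Section Relabel.
Variables (R : realType) (n : nat) (s : 'I_n -> 'I_n).
Hypothesis sK : involutive s.
Implicit Types (M : 'M[R]_n) (x : 'rV[R]_n).

Lemma qform_mxsub M x : qform (mxsub s s M) x = qform M (colsub s x).
Proof.
rewrite !qformE (reindex_inj (inv_inj sK)); apply: eq_bigr => j _.
by rewrite (reindex_inj (inv_inj sK)); apply: eq_bigr => i _; rewrite !mxE !sK.
Qed.

Lemma sqnorm_colsub x : sqnorm (colsub s x) = sqnorm x.
Proof.
rewrite /sqnorm -qform_mxsub; congr qform; apply/matrixP => i j.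
by rewrite !mxE (inj_eq (inv_inj sK)).
Qed.

Lemma rayleigh_ub_mxsub M l : rayleigh_ub M l -> rayleigh_ub (mxsub s s M) l.
Proof. by move=> ub x; rewrite qform_mxsub -(sqnorm_colsub x) ub. Qed.

End Relabel.

Section ComplementDistanceMatrix.
Variables (R : realType) (n : nat).
Implicit Types (f : rel 'I_n) (x : 'rV[R]_n).

Definition cdist_mx f : 'M[R]_n := \matrix_(i, j) (cdist f i j)%:R.

Lemma dist_mx_tr f : symmetric f -> (dist_mx R f)^T = dist_mx R f.
Proof. by move=> sf; apply/matrixP => i j; rewrite !mxE gdist_sym. Qed.

Lemma cdist_mx_le_dist_mx_compl f i j :
  (1 < n)%N -> cdist_mx f i j <= dist_mx R (compl f) i j.
Proof. by move=> n_gt1; rewrite !mxE ler_nat cdist_le_gdist_compl ?card_ord. Qed.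

Lemma dist_mx_compl_cdist f :
  symmetric f -> (4 <= diam f)%N -> dist_mx R (compl f) = cdist_mx f.
Proof. by move=> sf diam_ge4; apply/matrixP => i j; rewrite !mxE gdist_compl. Qed.

Lemma cdist_mx_tr f : symmetric f -> (cdist_mx f)^T = cdist_mx f.
Proof. by move=> sf; apply/matrixP => i j; rewrite !mxE /cdist eq_sym sf. Qed.

Lemma cdist_mx_ge0 f i j : 0 <= cdist_mx f i j.
Proof. by rewrite mxE. Qed.

Lemma cdist_mx_gt0 f i j : i != j -> 0 < cdist_mx f i j.
Proof. by rewrite mxE /cdist => /negbTE->; case: (f i j). Qed.

Section MoveNeighbours.
Variables (f : rel 'I_n) (a b : 'I_n) (S : pred 'I_n).
Hypotheses (sf : symmetric f) (irf : irreflexive f) (neq_ab : a != b).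
Hypothesis S_nbr : forall s, S s -> [/\ f a s, s != b & ~~ f b s].

Let g := move_nbrs f a b S.

Let Sa : S a = false.
Proof. by apply/negP => /S_nbr[]; rewrite irf. Qed.

Let Sb : S b = false.
Proof. by apply/negP => /S_nbr[_]; rewrite eqxx. Qed.

Let arm_mx c : 'M[R]_n := \matrix_(i, j) ((i == c) && S j)%:R.

Let S_neq s t : S s -> S t = false -> s != t.
Proof. by move=> Ss St; apply: contraTneq Ss => ->; rewrite St. Qed.

Let cdist_move_entry i j : (cdist g i j)%:R - (cdist f i j)%:R =
  ((i == b) && S j)%:R + ((j == b) && S i)%:R - ((i == a) && S j)%:R
    - ((j == a) && S i)%:R :> R.
Proof.
rewrite /cdist; case Sj: (S j); case Si: (S i); rewrite ?andbT ?andbF.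
- have [ia ib] := (S_neq Si Sa, S_neq Si Sb); have [ja jb] := (S_neq Sj Sa, S_neq Sj Sb).
  by rewrite /g move_nbrs_far // (negbTE ia) (negbTE ib) (negbTE ja) (negbTE jb) /=; lra.
- have [ja jb] := (S_neq Sj Sa, S_neq Sj Sb); have [faj _ /negbTE fbj] := S_nbr Sj.
  have ij : i != j by apply: contraFneq Si => ->.
  rewrite (negbTE ij) /g /move_nbrs Si Sj (negbTE ja) (negbTE jb) ?andbF ?andbT /= ?orbF.
  have [-> | ib] := eqVneq i b; first by rewrite eq_sym (negbTE neq_ab) fbj /=; lra.
  have [-> | ia] := eqVneq i a; first by rewrite faj /=; lra.
  by case: (f i j) => /=; lra.
- have [ia ib] := (S_neq Si Sa, S_neq Si Sb); have [fai _ /negbTE fbi] := S_nbr Si.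
  have ij : i != j by apply: contraTneq Si => ->; rewrite Sj.
  rewrite (negbTE ij) /g /move_nbrs Si Sj (negbTE ia) (negbTE ib) ?andbF ?andbT /= ?orbF.
  have [-> | jb] := eqVneq j b.
    by rewrite eq_sym (negbTE neq_ab) sf fbi /= ?orbT; lra.
  have [-> | ja] := eqVneq j a; first by rewrite sf fai /=; lra.
  by case: (f i j) => /=; lra.
- by rewrite /g move_nbrs_notin ?Si ?Sj //=; lra.
Qed.

Let cdist_mx_move :
  cdist_mx g = cdist_mx f + arm_mx b + (arm_mx b)^T - arm_mx a - (arm_mx a)^T.
Proof. by apply/matrixP => i j; have := cdist_move_entry i j; rewrite !mxE; lra. Qed.

Let qform_arm c x : qform (arm_mx c) x = x 0 c * \sum_(s | S s) x 0 s.
Proof.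
rewrite qformE [in RHS]big_mkcond mulr_sumr; apply: eq_bigr => j _ /=.
rewrite (bigD1 c) //= big1 => [|i /negbTE ic]; last by rewrite mxE ic mulr0 mul0r.
by rewrite mxE eqxx addr0; case: (S j); rewrite ?mulr1 ?mulr0 ?mul0r.
Qed.

Lemma qform_move_nbrs x : qform (cdist_mx g) x =
  qform (cdist_mx f) x + 2 * (x 0 b - x 0 a) * \sum_(s | S s) x 0 s.
Proof. by rewrite cdist_mx_move !qformBl !qformDl !qform_tr !qform_arm; ring. Qed.

Lemma col_move_nbrs x :
  (x *m cdist_mx g) 0 a = (x *m cdist_mx f) 0 a - \sum_(s | S s) x 0 s.
Proof.
rewrite cdist_mx_move !mxE [\sum_(s | S s) _]big_mkcond -sumrB; apply: eq_bigr => i _.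
by rewrite !mxE Sa eqxx (negbTE neq_ab) !andbF; case: (S i) => /=; ring.
Qed.

Variables (M : 'M[R]_n) (x : 'rV[R]_n) (l0 l1 : R).
Hypotheses (x_gt0 : forall i, 0 < x 0 i) (x_unit : sqnorm x = 1).
Hypothesis x_eigen : x *m cdist_mx f = l0 *: x.
Hypotheses (sM : M^T = M) (M_ge : forall i j, cdist_mx g i j <= M i j).
Hypotheses (M_ub : rayleigh_ub M l1) (S_ne0 : exists s, S s).

Lemma move_nbrs_rayleigh_lt : x 0 a <= x 0 b -> l0 < l1.
Proof.
move=> le_ab; have sumS_gt0 : 0 < \sum_(s | S s) x 0 s.
  case: S_ne0 => s Ss; rewrite (bigD1 s) //= ltr_wpDr ?x_gt0 //.
  by apply: sumr_ge0 => i _; apply: ltW.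
have q_f : qform (cdist_mx f) x = l0 by rewrite (qform_eigen x_eigen) x_unit mulr1.
have q_g : l0 <= qform (cdist_mx g) x.
  by rewrite qform_move_nbrs q_f lerDl mulr_ge0 ?mulr_ge0 ?subr_ge0 // ltW.
have q_M : qform (cdist_mx g) x <= qform M x by apply: ler_qform => // i; apply: ltW.
have q_ub : qform M x <= l1 by rewrite -[l1]mulr1 -x_unit.
rewrite lt_def (le_trans q_g (le_trans q_M q_ub)) andbT eq_sym; apply/eqP => l10.
(* Equality makes [x] an eigenvector of [M = cdist_mx g] for [l0], against [col_move_nbrs]. *)
have x_eigen_M : x *m M = l1 *: x.
  by apply: rayleigh_eigen; rewrite // x_unit mulr1; apply/le_anti/andP; split; lra.
have gM : cdist_mx g = M.
  apply/matrixP => i j; apply: qform_eq_entries M_ge x_gt0 _ i j.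
  by apply/le_anti/andP; split; lra.
move: (col_move_nbrs x); rewrite gM x_eigen_M x_eigen l10 !mxE => /eqP.
by rewrite -subr_eq0 opprB addrC subrK gt_eqF.
Qed.

End MoveNeighbours.
End ComplementDistanceMatrix.

Section GtsSpectralRadius.
Variables (R : realType) (n : nat) (e : rel 'I_n) (u v w : 'I_n) (p : seq 'I_n).
Hypotheses (se : symmetric e) (ie : irreflexive e) (ac : acyclic e) (n_gt1 : (1 < n)%N).
Hypotheses (e_path : path e u (rcons p v)) (uniq_path : uniq (u :: rcons p v)).
Hypotheses (w_last : w = last u p) (deg2 : all (fun z => deg e z == 2) p).
Variables (x : 'rV[R]_n) (l0 l1 : R).
Hypotheses (x_gt0 : forall i, 0 < x 0 i) (x_unit : sqnorm x = 1).
Hypothesis x_eigen : x *m cdist_mx R e = l0 *: x.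
Hypothesis ub1 : rayleigh_ub (dist_mx R (compl (gts_graph e u v w))) l1.

Let M1 := dist_mx R (compl (gts_graph e u v w)).

Let sM1 : M1^T = M1.
Proof. exact/dist_mx_tr/compl_sym/gts_graph_sym. Qed.

Lemma gts_rayleigh_lt_v : deg e v != 1%N -> x 0 v <= x 0 u -> l0 < l1.
Proof.
move=> dv; apply: (@move_nbrs_rayleigh_lt _ _ _ _ _ (fun y => e v y && (y != w))
  se ie _ _ M1) => //.
- by rewrite eq_sym (gts_neq_uv uniq_path).
- exact: (gts_moved_nbr se ie ac e_path uniq_path w_last deg2).
- by move=> i j; apply: cdist_mx_le_dist_mx_compl.
- exact: (gts_moved_exists se ie ac e_path uniq_path w_last deg2).
Qed.

Lemma gts_rayleigh_lt_u : deg e u != 1%N -> x 0 u <= x 0 v -> l0 < l1.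
Proof.
move=> du; have revK := path_revK uniq_path; set r := path_rev u v p in revK.
apply: (@move_nbrs_rayleigh_lt _ _ _ _ _ (fun t => e u t && (t != path_nbr u v p))
  se ie _ _ (mxsub r r M1)) => //.
- exact: (gts_neq_uv uniq_path).
- exact: (gts_rev_moved_nbr se ie ac e_path uniq_path deg2).
- by rewrite trmx_mxsub sM1.
- move=> i j; have := cdist_mx_le_dist_mx_compl R (gts_graph e u v w) (r i) (r j) n_gt1.
  rewrite /M1 !mxE /cdist (inj_eq (can_inj revK)).
  by rewrite (gts_graph_path_rev se ie ac e_path uniq_path w_last deg2).
- exact: rayleigh_ub_mxsub.
- exact: (gts_rev_moved_exists se ie ac e_path uniq_path deg2).
Qed.

End GtsSpectralRadius.

Theorem mainTheorem1 (R : realType) (n : nat) (e : rel 'I_n) (u v w : 'I_n) :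
  symmetric e -> irreflexive e -> is_tree e ->
  (4 <= diam e)%N ->
  gts_data e u v w -> proper_gts e u v ->
  exists l0 l1 : R,
    [/\ largest_eig (dist_mx R (compl e)) l0,
        largest_eig (dist_mx R (compl (gts_graph e u v w))) l1 & l0 < l1].
Proof.
move=> se ie [_ ac] diam_ge4 [p [e_path uniq_path w_last deg2]] [du dv].
have n_gt1 : (1 < n)%N by rewrite -(card_ord n) (leq_trans _ (card_ge4 diam_ge4)).
have n_gt0 := ltnW n_gt1.
have [l0 [x [x_gt0 x_unit x_eigen ub0]]] :=
  perron_vector n_gt0 (cdist_mx_tr R se) (@cdist_mx_ge0 R n e) (@cdist_mx_gt0 R n e).
have sM1 := dist_mx_tr R (compl_sym (gts_graph_sym u v w se)).
have [l1 [c [c_unit c_eigen ub1]]] := rayleigh_exists sM1 n_gt0.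
exists l0, l1; split.
- rewrite dist_mx_compl_cdist //; apply: largest_eig_rayleigh x_eigen ub0.
  by rewrite -sqnorm_gt0 x_unit.
- by apply: largest_eig_rayleigh c_eigen ub1; rewrite -sqnorm_gt0 c_unit.
have [le_vu|/ltW le_uv] := lerP (x 0 v) (x 0 u).
- exact: (gts_rayleigh_lt_v se ie ac n_gt1 e_path uniq_path w_last deg2
    x_gt0 x_unit x_eigen ub1).
- exact: (gts_rayleigh_lt_u se ie ac n_gt1 e_path uniq_path w_last deg2
    x_gt0 x_unit x_eigen ub1).
Qed.
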